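(* Let $\mathfrak A=(S_\Omega,S_{\mathcal E},\Omega,\mathcal E,B,u)$ be an accessible GPT fragment such that for every $e\in\mathcal E$ there exists $e^\perp\in\mathcal E$ with $e+e^\perp=u$. If $\mathfrak A$ admits a simplicial-cone embedding $(\Lambda',\tau'_\Omega,\tau'_{\mathcal E})$, then it admits a simplex embedding $(\Lambda,\tau_\Omega,\tau_{\mathcal E})$ with $\Lambda=\{\lambda\in\Lambda':\tau'_{\mathcal E}(u)_\lambda\neq0\}\subseteq\Lambda'$, given by $\tau_{\mathcal E}(w)_\lambda=\tau'_{\mathcal E}(w)_\lambda/\tau'_{\mathcal E}(u)_\lambda$ and $\tau_\Omega(v)_\lambda=\tau'_{\mathcal E}(u)_\lambda\,\tau'_\Omega(v)_\lambda$ for $\lambda\in\Lambda$.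
   Context: An accessible GPT fragment $\mathfrak A=(S_\Omega,S_{\mathcal E},\Omega,\mathcal E,B,u)$ consists of: finite-dimensional real vector spaces $S_\Omega$ and $S_{\mathcal E}$; a set $\Omega\subset S_\Omega$ of states which spans $S_\Omega$; a set $\mathcal E\subset S_{\mathcal E}^*$ of effects which spans $S_{\mathcal E}^*$; a bilinear form $B:S_{\mathcal E}^*\times S_\Omega\to\mathbb R$ (the probability rule); and a unit effect $u\in\mathcal E$. A simplicial-cone embedding of $\mathfrak A$ is a finite set $\Lambda$ together with linear maps $\tau_\Omega:S_\Omega\to\mathbb R^\Lambda$ and $\tau_{\mathcal E}:S_{\mathcal E}^*\to\mathbb R^\Lambda$ such that $\tau_\Omega(s)$ is entrywise nonnegative for all $s\in\Omega$, $\tau_{\mathcal E}(e)$ is entrywise nonnegative for all $e\in\mathcal E$, and $B(w,v)=\tau_{\mathcal E}(w)\cdot\tau_\Omega(v)$ (standard dot product) for all $w\in S_{\mathcal E}^*$, $v\in S_\Omega$. A simplex embedding is a simplicial-cone embedding which additionally satisfies $\tau_{\mathcal E}(u)=(1,1,\dots,1)$. *)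

From HB Require Import structures.
From mathcomp Require Import all_boot all_order all_algebra.
From mathcomp Require Import all_reals.
Set Implicit Arguments. Unset Strict Implicit. Unset Printing Implicit Defensive.
Import Order.TTheory GRing.Theory Num.Theory.
Local Open Scope ring_scope.

Section GPT.
Variable R : realType.

Definition dualsp (S : vectType R) := 'Hom(S, R^o).

Definition spans (V : vectType R) (A : V -> Prop) : Prop :=
  forall v : V, exists s : seq V, (forall x, x \in s -> A x) /\ v \in <<s>>%VS.

Definition bilinear_form (W V : vectType R) (B : W -> V -> R) : Prop :=
  (forall (a : R) w1 w2 v, B (a *: w1 + w2) v = a * B w1 v + B w2 v) /\
  (forall (a : R) w v1 v2, B w (a *: v1 + v2) = a * B w v1 + B w v2).

Definition accessible_fragment (SO SE : vectType R) (Om : SO -> Prop)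
  (Ef : dualsp SE -> Prop) (B : dualsp SE -> SO -> R) (u : dualsp SE) : Prop :=
  [/\ spans Om, spans Ef, bilinear_form B & Ef u].

(* Linear maps V -> R^L, with R^L represented as functions L -> R. *)
Definition linear_to (V : vectType R) (L : finType) (f : V -> L -> R) : Prop :=
  forall (a : R) x y (l : L), f (a *: x + y) l = a * f x l + f y l.

Definition dotL (L : finType) (f g : L -> R) : R := \sum_(l : L) f l * g l.

Definition simplicial_cone_embedding (SO SE : vectType R) (Om : SO -> Prop)
  (Ef : dualsp SE -> Prop) (B : dualsp SE -> SO -> R)
  (L : finType) (tO : SO -> L -> R) (tE : dualsp SE -> L -> R) : Prop :=
  [/\ linear_to tO, linear_to tE,
      (forall s, Om s -> forall l, 0 <= tO s l),
      (forall e, Ef e -> forall l, 0 <= tE e l) &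
      (forall w v, B w v = dotL (tE w) (tO v))].

Definition simplex_embedding (SO SE : vectType R) (Om : SO -> Prop)
  (Ef : dualsp SE -> Prop) (B : dualsp SE -> SO -> R) (u : dualsp SE)
  (L : finType) (tO : SO -> L -> R) (tE : dualsp SE -> L -> R) : Prop :=
  simplicial_cone_embedding Om Ef B tO tE /\ (forall l, tE u l = 1).

End GPT.

(* A simplicial-cone embedding is turned into a simplex embedding by rescaling
   each coordinate λ by τ'_E(u)_λ: effects are divided by it and states are
   multiplied by it, which leaves the dot product, linearity and positivity
   intact and makes the unit effect the all-ones vector.  Coordinates where
   τ'_E(u) vanishes can be dropped: there, e + e^⊥ = u and positivity force
   every effect to vanish, hence (as effects span) every functional does, so
   they contribute nothing to the probability rule. *)

From HB Require Import structures.
From mathcomp Require Import all_boot all_order all_algebra.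
From mathcomp Require Import all_reals.
From mathcomp Require Import lra.
Set Implicit Arguments. Unset Strict Implicit. Unset Printing Implicit Defensive.
Import Order.TTheory GRing.Theory Num.Theory.
Local Open Scope ring_scope.

Section LinearTo.
Variables (R : realType) (V : vectType R) (L : finType) (f : V -> L -> R).
Hypothesis linf : linear_to f.

Lemma linear_to0 l : f 0 l = 0.
Proof.
by have := linf 1 0 0 l; rewrite scale1r addr0 mul1r; lra.
Qed.

Lemma linear_to_sum n (a : 'I_n -> R) (X : 'I_n -> V) l :
  f (\sum_i a i *: X i) l = \sum_i a i * f (X i) l.
Proof.
elim: n a X => [|n IHn] a X; first by rewrite !big_ord0 linear_to0.
by rewrite !big_ord_recr /= addrC linf IHn addrC.
Qed.

Lemma linear_to_span_eq0 (A : V -> Prop) l :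
  spans A -> (forall x, A x -> f x l = 0) -> forall v, f v l = 0.
Proof.
move=> spanA fA0 v; have [s [sA v_s]] := spanA v.
rewrite (coord_span (X := in_tuple s) v_s) linear_to_sum big1 // => i _.
by rewrite fA0 ?mulr0 //; apply: sA; apply: mem_nth.
Qed.

Lemma linear_to_weightl (L2 : finType) (h : L2 -> L) (c : L2 -> R) :
  linear_to (fun v k => c k * f v (h k)).
Proof. by move=> a x y k; rewrite linf mulrDr mulrCA. Qed.

Lemma linear_to_weightr (L2 : finType) (h : L2 -> L) (c : L2 -> R) :
  linear_to (fun v k => f v (h k) * c k).
Proof. by move=> a x y k; rewrite linf mulrDl mulrA. Qed.

End LinearTo.

Lemma effect_eq0_unit_eq0 (R : realType) (V : vectType R) (L : finType)
    (Ef : V -> Prop) (u : V) (tE : V -> L -> R) l :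
  linear_to tE -> (forall e, Ef e -> 0 <= tE e l) ->
  (forall e, Ef e -> exists ep, Ef ep /\ e + ep = u) ->
  tE u l = 0 -> forall e, Ef e -> tE e l = 0.
Proof.
move=> linE posE compl ul0 e Ee; have [ep [Eep sum_u]] := compl e Ee.
have := linE 1 e ep l; rewrite scale1r mul1r sum_u ul0.
by have := posE e Ee; have := posE ep Eep; lra.
Qed.

Lemma dotL_support (R : realType) (L : finType) (c f g : L -> R) :
  (forall l, c l = 0 -> f l = 0) ->
  dotL f g = dotL (L := {l : L | c l != 0})
    (fun k => f (val k) / c (val k)) (fun k => c (val k) * g (val k)).
Proof.
move=> cf0; rewrite /dotL (bigID (fun l => c l != 0)) /=.
rewrite [X in _ + X]big1 ?addr0; last first.
  by move=> l; rewrite negbK => /eqP /cf0 ->; rewrite mul0r.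
rewrite (eq_bigr (fun l => f l / c l * (c l * g l))); last first.
  by move=> l cl; rewrite mulrA divfK.
by rewrite (big_sub [pred l | c l != 0] (fun l => f l / c l * (c l * g l))).
Qed.

Theorem mainTheorem4 (R : realType) (SO SE : vectType R) (Om : SO -> Prop)
  (Ef : dualsp SE -> Prop) (B : dualsp SE -> SO -> R) (u : dualsp SE) :
  accessible_fragment Om Ef B u ->
  (forall e, Ef e -> exists ep, Ef ep /\ e + ep = u) ->
  forall (L' : finType) (tO' : SO -> L' -> R) (tE' : dualsp SE -> L' -> R),
  simplicial_cone_embedding Om Ef B tO' tE' ->
  simplex_embedding Om Ef B u
    (L := {l : L' | tE' u l != 0})
    (fun v l => tE' u (val l) * tO' v (val l))
    (fun w l => tE' w (val l) / tE' u (val l)).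
Proof.
move=> [_ spanE _ Eu] compl L' tO' tE' [linO linE posO posE HB].
have unit_eq0 l : tE' u l = 0 -> forall w, tE' w l = 0.
  move=> ul0; apply: (linear_to_span_eq0 linE spanE).
  exact: (effect_eq0_unit_eq0 linE (fun e Ee => posE e Ee l) compl ul0).
split; last by move=> [l /= ul]; rewrite divff.
split.
- exact: linear_to_weightl.
- exact: linear_to_weightr.
- by move=> s Os l; rewrite mulr_ge0 ?posO ?posE.
- by move=> e Ee l; rewrite divr_ge0 ?posE.
- by move=> w v; rewrite HB; apply: (dotL_support (c := tE' u)) => l /unit_eq0 ->.
Qed.
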